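(* Let $F\colon\mathbf{Ring}^{\mathrm{op}}\to\mathbf{Loc}$ be any functor whose restriction to commutative rings is naturally isomorphic to the Zariski spectrum functor. Then $F(R)$ is the trivial locale for every Kochen--Specker ring $R$; in particular $F(M_n(\mathbb{C}))$ is trivial for all $n\ge 3$.
   Context: $\mathbf{Ring}$ is the category of unital rings and unital ring homomorphisms; $\mathbf{Loc}$ is the category of locales. The Zariski spectrum of a commutative ring is regarded as a (coherent) locale, namely the locale whose frame is the frame of radical ideals of the ring. A locale is trivial if its frame satisfies $0=1$. A ring $R$ is Kochen--Specker if there is a ring homomorphism $M_n(\mathbb{C})\to R$ for some $n\ge 3$, where $M_n(\mathbb{C})$ is the ring of $n\times n$ complex matrices. *)

From HB Require Import structures.
From mathcomp Require Import all_boot all_order all_algebra.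
From mathcomp Require Import complex.
From mathcomp Require Import Rstruct.
Set Implicit Arguments. Unset Strict Implicit. Unset Printing Implicit Defensive.
Import GRing.Theory.
Local Open Scope ring_scope.

Definition Cplx : Type := complex Rdefinitions.R.

(** * Frames (= locales, via Loc = Frm^op).
    A frame: a poset with all joins (of arbitrary subsets), finite meets
    (binary meet and top), with binary meets distributing over arbitrary joins. *)
Record Frame := {
  fcar :> Type;
  fle : fcar -> fcar -> Prop;
  ftop : fcar;
  fmeet : fcar -> fcar -> fcar;
  fsup : (fcar -> Prop) -> fcar;
  fle_refl : forall x, fle x x;
  fle_trans : forall x y z, fle x y -> fle y z -> fle x z;
  fle_antisym : forall x y, fle x y -> fle y x -> x = y;
  ftop_max : forall x, fle x ftop;
  fmeet_glb : forall x y z, fle z (fmeet x y) <-> (fle z x /\ fle z y);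
  fsup_lub : forall (S : fcar -> Prop) z,
      fle (fsup S) z <-> (forall s, S s -> fle s z);
  fdistr : forall a (S : fcar -> Prop),
      fmeet a (fsup S) = fsup (fun x => exists2 s, S s & x = fmeet a s)
}.

Definition fbot (L : Frame) : L := fsup (fun _ : L => False).

Definition trivial_locale (L : Frame) : Prop := fbot L = ftop L.

(** Frame homomorphisms: preserve finite meets and arbitrary joins.
    A locale map X -> Y is a frame homomorphism O(Y) -> O(X). *)
Definition frame_hom (L M : Frame) (h : L -> M) : Prop :=
  [/\ h (ftop L) = ftop M,
      forall x y, h (fmeet x y) = fmeet (h x) (h y)
    & forall S : L -> Prop, h (fsup S) = fsup (fun y => exists2 x, S x & y = h x)].

(** * Functors Ring^op -> Loc, i.e. covariant functors Ring -> Frm.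
    Ring = unital (possibly zero) rings and unital ring homomorphisms. *)
Record RingLocFunctor := {
  Fob : pzRingType -> Frame;
  (* for f : R -> S, F(f) : F(S) -> F(R) in Loc, i.e. a frame hom F(R) -> F(S) *)
  Fmap : forall (R S : pzRingType), {rmorphism R -> S} -> Fob R -> Fob S;
  Fmap_hom : forall (R S : pzRingType) (f : {rmorphism R -> S}), frame_hom (Fmap f);
  Fmap_id : forall (R : pzRingType) (f : {rmorphism R -> R}),
      (forall r, f r = r) -> forall u, Fmap f u = u;
  Fmap_comp : forall (R S T : pzRingType) (f : {rmorphism R -> S}) (g : {rmorphism S -> T})
      (h : {rmorphism R -> T}),
      (forall r, h r = g (f r)) -> forall u, Fmap h u = Fmap g (Fmap f u)
}.

(** * The Zariski spectrum: the frame of radical ideals of a commutative ring. *)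
Definition radical_ideal (A : comPzRingType) (I : A -> Prop) : Prop :=
  [/\ I 0,
      forall x y, I x -> I y -> I (x + y),
      forall a x, I x -> I (a * x)
    & forall x n, I (x ^+ n) -> I x].

(** For f : A -> B, the frame map Rad(A) -> Rad(B) underlying Spec(f):
    I |-> the radical of the ideal generated by f(I), i.e. the smallest
    radical ideal of B containing f(I). *)
Definition rad_ext (A B : comPzRingType) (f : {rmorphism A -> B})
    (I : A -> Prop) : B -> Prop :=
  fun b => forall J : B -> Prop, radical_ideal J ->
    (forall a, I a -> J (f a)) -> J b.

(** A natural isomorphism between the restriction of F to commutative rings
    and the Zariski spectrum functor: for each commutative ring A an
    isomorphism of frames (equivalently, of posets) between F(A) and the
    frame of radical ideals of A (ordered by inclusion), natural in ring
    homomorphisms between commutative rings. *)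
Definition zariski_nat_iso (F : RingLocFunctor)
    (phi : forall A : comPzRingType, Fob F A -> (A -> Prop)) : Prop :=
  [/\
      forall (A : comPzRingType) (u : Fob F A), radical_ideal (phi A u),
      forall (A : comPzRingType) (I : A -> Prop), radical_ideal I ->
        exists u : Fob F A, forall a, phi A u a <-> I a,
      forall (A : comPzRingType) (u v : Fob F A),
        fle u v <-> (forall a, phi A u a -> phi A v a)
    &
      forall (A B : comPzRingType) (f : {rmorphism A -> B}) (u : Fob F A),
        forall b, phi B (@Fmap F A B f u) b <-> rad_ext f (phi A u) b].

Definition kochen_specker (R : pzRingType) : Prop :=
  exists m : nat, exists f : {rmorphism 'M[Cplx]_(m.+3) -> R}, True.

Arguments zariski_nat_iso : clear implicits.

(* An idempotent [p] of a ring [A] gives a ring map [K^2 -> A],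
   [(a, b) |-> a p + b (1 - p)]; transporting the open point [0] of
   [Spec K^2] along it defines a truth value [truth p] in the frame [F(A)].
   Naturality on the commutative rings [K^d] shows that the truth values of
   a complete family of orthogonal idempotents are the images of the [d]
   open points of [Spec K^d], hence cover [F(A)] and are pairwise disjoint.
   In [M_n(K)], [n >= 3], this makes [v |-> truth (P_v)] on rank-one
   projections a frame-valued Kochen--Specker colouring: orthogonal vectors
   get disjoint values, and every orthogonal basis of a three-dimensional
   coordinate subspace containing [e_j] has values covering [truth E_jj].
   A finite Kochen--Specker configuration of integer vectors, refuted by an
   explicit case-split tree, forces [truth E_jj = 0] for each [j]; as the
   [E_jj] form a complete family, [0 = 1] in [F(M_n(K))]. A ring receiving
   a map from [M_n(C)] receives a frame map from [F(M_n(C))]. *)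

From HB Require Import structures.
From mathcomp Require Import all_boot all_order all_algebra.
From mathcomp Require Import complex.
From mathcomp Require Import Rstruct.
From Stdlib Require Import ClassicalEpsilon.
From mathcomp Require Import ring.
Set Implicit Arguments. Unset Strict Implicit. Unset Printing Implicit Defensive.
Import GRing.Theory.
Local Open Scope ring_scope.

Section FrameTheory.
Variable L : Frame.
Implicit Types (x y z : L) (S : L -> Prop).

Lemma fmeet_lel x y : fle (fmeet x y) x.
Proof. by case: (proj1 (fmeet_glb x y _) (fle_refl (fmeet x y))). Qed.

Lemma fmeet_ler x y : fle (fmeet x y) y.
Proof. by case: (proj1 (fmeet_glb x y _) (fle_refl (fmeet x y))). Qed.

Lemma fle_fmeet x y z : fle z x -> fle z y -> fle z (fmeet x y).
Proof. by move=> zx zy; apply/fmeet_glb. Qed.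

Lemma fle_fsup S s : S s -> fle s (fsup S).
Proof. exact: (proj1 (fsup_lub S (fsup S)) (fle_refl _)). Qed.

Lemma fsup_le S z : (forall s, S s -> fle s z) -> fle (fsup S) z.
Proof. by move=> Sz; apply/fsup_lub. Qed.

Lemma fbot_le x : fle (fbot L) x.
Proof. exact: fsup_le. Qed.

Lemma fle_top_bot_trivial : fle (ftop L) (fbot L) -> trivial_locale L.
Proof. by move=> topbot; apply: fle_antisym => //; apply: fbot_le. Qed.

Lemma fmeet_idl x y : fle x y -> fmeet x y = x.
Proof.
by move=> xy; apply: fle_antisym; [apply: fmeet_lel | apply: fle_fmeet (fle_refl x) xy].
Qed.

Lemma fle_fsup_bot x S :
  fle x (fsup S) -> (forall s, S s -> fle (fmeet x s) (fbot L)) -> fle x (fbot L).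
Proof.
by move=> xS Sbot; rewrite -(fmeet_idl xS) fdistr; apply: fsup_le => _ [s /Sbot ? ->].
Qed.

Lemma fle_fsup_disjoint x S e :
  fle (ftop L) (fsup (fun y => S y \/ y = e)) -> fle (fmeet x e) (fbot L) ->
  fle x (fsup S).
Proof.
move=> cover xe; have xSe := fle_trans (ftop_max x) cover.
rewrite -(fmeet_idl xSe) fdistr; apply: fsup_le => _ [s [Ss | ->] ->].
  exact: fle_trans (fmeet_ler _ _) (fle_fsup Ss).
exact: fle_trans xe (fbot_le _).
Qed.

End FrameTheory.

Section FrameMorphism.
Variables (L M : Frame) (h : L -> M).
Hypothesis h_hom : frame_hom h.

Lemma frame_hom_le (x y : L) : fle x y -> fle (h x) (h y).
Proof. by case: h_hom => _ hmeet _ /fmeet_idl <-; rewrite hmeet; apply: fmeet_ler. Qed.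

Lemma frame_hom_bot : h (fbot L) = fbot M.
Proof.
case: h_hom => _ _ hsup; rewrite /fbot hsup.
by apply: fle_antisym; [apply: fsup_le => y [] | apply: fbot_le].
Qed.

Lemma frame_hom_disjoint (x y : L) :
  fle (fmeet x y) (fbot L) -> fle (fmeet (h x) (h y)) (fbot M).
Proof.
by case: h_hom => _ hmeet _ xy; rewrite -hmeet -frame_hom_bot; apply: frame_hom_le.
Qed.

Lemma frame_hom_trivial : trivial_locale L -> trivial_locale M.
Proof. by case: h_hom => htop _ _; rewrite /trivial_locale -frame_hom_bot -htop => ->. Qed.

End FrameMorphism.

Inductive ks_tree := KSLeaf of nat & nat | KSNode of nat & ks_tree & ks_tree & ks_tree.

(* A [KSNode t T0 T1 T2] branches on which vector of the [t]-th basis is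
   chosen as true; a [KSLeaf u v] closes a branch in which two orthogonal
   vectors [u] and [v] have both been chosen. *)
Fixpoint ks_refutes (orth : rel nat) (bases : seq (seq nat)) (chosen : seq nat)
    (T : ks_tree) : bool :=
  match T with
  | KSLeaf u v => [&& u \in chosen, v \in chosen & orth u v]
  | KSNode t T0 T1 T2 =>
      let b := nth [::] bases t in
      [&& (t < size bases)%N, ks_refutes orth bases (nth 0%N b 0 :: chosen) T0,
          ks_refutes orth bases (nth 0%N b 1 :: chosen) T1
        & ks_refutes orth bases (nth 0%N b 2 :: chosen) T2]
  end.

Section KochenSpeckerInFrames.
Variables (L : Frame) (val : nat -> L) (x : L) (orth : rel nat) (bases : seq (seq nat)).
Hypothesis x_le_bases : forall b, b \in bases ->
  fle x (fsup (fun s => exists t : 'I_3, s = val (nth 0%N b t))).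
Hypothesis val_orth : forall u v, orth u v -> fle (fmeet (val u) (val v)) (fbot L).

Fixpoint fmeet_chosen (chosen : seq nat) : L :=
  if chosen is c :: cs then fmeet (fmeet_chosen cs) (val c) else x.

Lemma fmeet_chosen_le_x chosen : fle (fmeet_chosen chosen) x.
Proof.
elim: chosen => [|c cs IH] /=; first exact: fle_refl.
exact: fle_trans (fmeet_lel _ _) IH.
Qed.

Lemma fmeet_chosen_le_val chosen c : c \in chosen -> fle (fmeet_chosen chosen) (val c).
Proof.
elim: chosen => [|c' cs IH] //=; rewrite inE => /predU1P [->|cs_c].
  exact: fmeet_ler.
exact: fle_trans (fmeet_lel _ _) (IH cs_c).
Qed.

Lemma ks_refutes_sound T chosen :
  ks_refutes orth bases chosen T -> fle (fmeet_chosen chosen) (fbot L).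
Proof.
elim: T chosen => [u v | t T0 IH0 T1 IH1 T2 IH2] chosen /=.
  case/and3P=> u_in v_in /val_orth; apply: fle_trans.
  by apply: fle_fmeet; apply: fmeet_chosen_le_val.
case/and4P=> /(mem_nth [::]) /x_le_bases x_le ref0 ref1 ref2.
apply: fle_fsup_bot (fle_trans (fmeet_chosen_le_x _) x_le) _.
by move=> _ [[[|[|[|//]]] ?] ->]; [exact: IH0 ref0 | exact: IH1 ref1 | exact: IH2 ref2].
Qed.

End KochenSpeckerInFrames.

Definition power_ring (K : comPzRingType) (d : nat) : Type := {ffun 'I_d -> K}.
HB.instance Definition _ K d := GRing.PzRing.on (power_ring K d).
Fact power_ring_mulC K d : commutative (@GRing.mul (power_ring K d)).
Proof. by move=> f g; apply/ffunP=> i; rewrite !ffunE mulrC. Qed.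
HB.instance Definition _ K d :=
  GRing.PzRing_hasCommutativeMul.Build (power_ring K d) (@power_ring_mulC K d).

Lemma power_ringXE K d (f : power_ring K d) n i : (f ^+ n) i = f i ^+ n.
Proof. by elim: n => [|n IH]; rewrite ?expr0 ?exprS ffunE ?IH. Qed.

Section IdempotentDecomposition.
Variables (K : comPzRingType) (A : algType K).

Definition orth_idem d (P : 'I_d -> A) : Prop :=
  forall i j, P i * P j = if i == j then P i else 0.

Lemma orth_idem_mul_sum d (P : 'I_d -> A) i : orth_idem P -> P i * \sum_j P j = P i.
Proof.
move=> hP; rewrite mulr_sumr (bigD1 i) //= hP eqxx big1 ?addr0 //.
by move=> j; rewrite hP eq_sym => /negbTE ->.
Qed.

Lemma orth_idem_sum_mul d (P : 'I_d -> A) i : orth_idem P -> (\sum_j P j) * P i = P i.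
Proof.
move=> hP; rewrite mulr_suml (bigD1 i) //= hP eqxx big1 ?addr0 //.
by move=> j /negbTE; rewrite hP => ->.
Qed.

Record idem_decomp d := IdemDecomp {
  idem_part :> 'I_d -> A;
  idem_part_orth : orth_idem idem_part;
  idem_part_sum : \sum_i idem_part i = 1 }.

Definition decomp_fun d (E : idem_decomp d) (f : power_ring K d) : A :=
  \sum_i f i *: E i.

Fact decomp_fun_zmod d (E : idem_decomp d) : zmod_morphism (decomp_fun E).
Proof.
by move=> f g; rewrite -sumrB; apply: eq_bigr => i _; rewrite !ffunE scalerBl.
Qed.

Fact decomp_fun_monoid d (E : idem_decomp d) : monoid_morphism (decomp_fun E).
Proof.
split=> [|f g].
  by rewrite -(idem_part_sum E); apply: eq_bigr => i _; rewrite ffunE scale1r.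
rewrite mulr_suml; apply: eq_bigr => i _.
rewrite -scalerAl mulr_sumr (bigD1 i) //= big1 ?addr0 => [|j ji].
  by rewrite -scalerAr idem_part_orth eqxx scalerA ffunE.
by rewrite -scalerAr idem_part_orth eq_sym (negbTE ji) !scaler0.
Qed.

HB.instance Definition _ d (E : idem_decomp d) :=
  GRing.isZmodMorphism.Build (power_ring K d) A (decomp_fun E) (decomp_fun_zmod E).
HB.instance Definition _ d (E : idem_decomp d) :=
  GRing.isMonoidMorphism.Build (power_ring K d) A (decomp_fun E) (decomp_fun_monoid E).

Definition compl_part d (P : 'I_d -> A) (i : 'I_d.+1) : A :=
  if unlift ord_max i is Some j then P j else 1 - \sum_j P j.

Lemma compl_part_lift d (P : 'I_d -> A) j : compl_part P (lift ord_max j) = P j.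
Proof. by rewrite /compl_part liftK. Qed.

Lemma compl_part_max d (P : 'I_d -> A) : compl_part P ord_max = 1 - \sum_j P j.
Proof. by rewrite /compl_part unlift_none. Qed.

Lemma compl_part_widen d (P : 'I_d -> A) j : compl_part P (widen_ord (leqnSn d) j) = P j.
Proof.
suff -> : widen_ord (leqnSn d) j = lift ord_max j by rewrite compl_part_lift.
by apply: val_inj; exact: (esym (lift_max j)).
Qed.

Lemma orth_idem_compl d (P : 'I_d -> A) : orth_idem P -> orth_idem (compl_part P).
Proof.
move=> hP i j.
have lift_max_neq (l : 'I_d) : (lift ord_max l == ord_max) = false.
  by apply/negbTE; rewrite eq_sym neq_lift.
case: (unliftP ord_max i) => [i'|] ->; case: (unliftP ord_max j) => [j'|] ->;
  rewrite ?compl_part_lift ?compl_part_max.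
- by rewrite (inj_eq lift_inj) hP.
- by rewrite lift_max_neq mulrBr mulr1 orth_idem_mul_sum ?subrr.
- by rewrite eq_sym lift_max_neq mulrBl mul1r orth_idem_sum_mul ?subrr.
have sum_idem : (\sum_i P i) * (\sum_i P i) = \sum_i P i.
  by rewrite mulr_sumr; apply: eq_bigr => l _; rewrite orth_idem_sum_mul.
by rewrite eqxx mulrBl mul1r mulrBr mulr1 sum_idem subrr subr0.
Qed.

Lemma compl_part_sum d (P : 'I_d -> A) : \sum_i compl_part P i = 1.
Proof.
rewrite big_ord_recr /= compl_part_max.
by under eq_bigr => i _ do rewrite compl_part_widen; rewrite addrC subrK.
Qed.

Definition compl_decomp d (P : 'I_d -> A) (hP : orth_idem P) : idem_decomp d.+1 :=
  IdemDecomp (orth_idem_compl hP) (compl_part_sum P).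

End IdempotentDecomposition.

Lemma delta_orth_idem (R : comNzRingType) n :
  orth_idem (fun i : 'I_n.+1 => delta_mx i i : 'M[R]_n.+1).
Proof.
move=> i j; rewrite -mulmxE mul_delta_mx_cond.
by case: eqP => [->|]; rewrite ?mulr1n ?mulr0n.
Qed.

Definition delta_decomp (R : comNzRingType) n : idem_decomp 'M[R]_n.+1 n.+1 :=
  IdemDecomp (@delta_orth_idem R n) (esym (mx1_sum_delta R n.+1)).

Definition vec3 := (int * int * int)%type.

Definition vcoord (v : vec3) (a : nat) : int :=
  match a with 0 => v.1.1 | 1 => v.1.2 | _ => v.2 end.

Definition dot (u v : vec3) : int :=
  vcoord u 0 * vcoord v 0 + vcoord u 1 * vcoord v 1 + vcoord u 2 * vcoord v 2.

Lemma dotC u v : dot u v = dot v u.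
Proof. by rewrite /dot !(mulrC (vcoord u _)). Qed.

(* [u, v, w] resolve the identity: [sum_t t_a t_b / |t|^2 = delta_ab],
   with the denominators cleared. *)
Definition complete3_check (u v w : vec3) : bool :=
  all (fun a => all (fun b =>
    vcoord u a * vcoord u b * (dot v v * dot w w)
    + vcoord v a * vcoord v b * (dot u u * dot w w)
    + vcoord w a * vcoord w b * (dot u u * dot v v)
    == (a == b)%:Z * (dot u u * dot v v * dot w w)) (iota 0 3)) (iota 0 3).

Section RankOneProjections.
Variables (K : numFieldType) (m : nat) (k : 'I_m.+3).
Hypothesis k_ge2 : (2 <= k)%N.

Definition chart_pos (a : nat) : 'I_m.+3 :=
  if a == 0%N then ord0 else if a == 1%N then Ordinal (isT : 1 < m.+3)%N else k.

(* Vectors of [vec3] are placed on the coordinates [0], [1] and [k]. *)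
Definition chart_index (i : 'I_m.+3) : option nat :=
  if val i == 0%N then Some 0%N else if val i == 1%N then Some 1%N
  else if i == k then Some 2%N else None.

Lemma chart_index_pos a : (a < 3)%N -> chart_index (chart_pos a) = Some a.
Proof.
rewrite /chart_index /chart_pos; case: a => [|[|[|//]]] _ //=.
by case: k k_ge2 => [[|[|k']] ?] //= _; rewrite eqxx.
Qed.

Lemma chart_index_some i a : chart_index i = Some a -> (a < 3)%N /\ i = chart_pos a.
Proof.
rewrite /chart_index /chart_pos.
case: eqP => [i0 [<-]|_]; first by split=> //; apply: val_inj.
case: eqP => [i1 [<-]|_]; first by split=> //; apply: val_inj.
by case: eqP => // -> [<-].
Qed.

Definition chart_coord (v : vec3) (i : 'I_m.+3) : K :=
  if chart_index i is Some a then (vcoord v a)%:~R else 0.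

Definition vproj (v : vec3) : 'M[K]_m.+3 :=
  \matrix_(i, j) (chart_coord v i * chart_coord v j / (dot v v)%:~R).

Lemma sum_chart_coord (u v : vec3) :
  \sum_i chart_coord u i * chart_coord v i = (dot u v)%:~R.
Proof.
have k0 : k != ord0 by case: k k_ge2 => [[|?] ?].
have k1 : (k == Ordinal (isT : 1 < m.+3)%N) = false by case: k k_ge2 => [[|[|?]] ?].
rewrite (bigD1 (chart_pos 0)) //= (bigD1 (chart_pos 1)) //= (bigD1 (chart_pos 2)) /=;
  last by rewrite /chart_pos /= k0 k1.
rewrite big1 ?addr0 => [|i /andP[/andP[i0 i1] i2]].
  by rewrite /chart_coord !chart_index_pos // /dot !rmorphD !rmorphM /= !addrA.
rewrite /chart_coord; case e: chart_index => [a|]; last by rewrite mul0r.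
have [a3 ia] := chart_index_some e; move: i0 i1 i2; rewrite ia.
by case: a a3 {e ia} => [|[|[|]]] //= _; rewrite eqxx ?andbF.
Qed.

Lemma vproj_mul (u v : vec3) :
  vproj u * vproj v = ((dot u v)%:~R / (dot u u)%:~R / (dot v v)%:~R)
    *: \matrix_(i, j) (chart_coord u i * chart_coord v j).
Proof.
apply/matrixP => i j; rewrite -mulmxE !mxE.
under eq_bigr do rewrite !mxE.
rewrite (eq_bigr (fun l => chart_coord u i * chart_coord v j / (dot u u)%:~R /
  (dot v v)%:~R * (chart_coord u l * chart_coord v l))) => [|l _]; last by ring.
by rewrite -mulr_sumr sum_chart_coord; ring.
Qed.

Lemma vproj_orth (u v : vec3) : dot u v = 0 -> vproj u * vproj v = 0.
Proof. by move=> uv; rewrite vproj_mul uv !mul0r scale0r. Qed.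

Lemma vproj_idem (u : vec3) : dot u u != 0 -> vproj u * vproj u = vproj u.
Proof.
move=> uu; have uuK : ((dot u u)%:~R : K) != 0 by rewrite intr_eq0.
by rewrite vproj_mul; apply/matrixP => i j; rewrite !mxE; field.
Qed.

Lemma vproj_orth_idem d (V : 'I_d -> vec3) :
  (forall t, dot (V t) (V t) != 0) -> (forall t t', t != t' -> dot (V t) (V t') = 0) ->
  orth_idem (fun t => vproj (V t)).
Proof.
move=> V_nz V_orth t t'; have [<-|tt'] := eqVneq t t'; first exact: vproj_idem.
exact/vproj_orth/V_orth.
Qed.

Definition complete3 (u v w : vec3) : Prop := forall a b, (a < 3)%N -> (b < 3)%N ->
  (vcoord u a * vcoord u b)%:~R / (dot u u)%:~R
  + (vcoord v a * vcoord v b)%:~R / (dot v v)%:~R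
  + (vcoord w a * vcoord w b)%:~R / (dot w w)%:~R = (a == b)%:R :> K.

Lemma complete3_checkP u v w : dot u u != 0 -> dot v v != 0 -> dot w w != 0 ->
  complete3_check u v w -> complete3 u v w.
Proof.
move=> uu vv ww /allP uvw a b a3 b3.
have a_in : a \in iota 0 3 by rewrite mem_iota.
have b_in : b \in iota 0 3 by rewrite mem_iota.
move: (uvw a a_in) => /allP /(_ b b_in) /eqP; move: uu vv ww.
move: (dot u u) (dot v v) (dot w w) => Nu Nv Nw uu vv ww.
move=> /(congr1 (fun z : int => z%:~R : K)); rewrite !(intrD, intrM) => E.
have [uuK vvK wwK] : [/\ (Nu%:~R : K) != 0, (Nv%:~R : K) != 0 & (Nw%:~R : K) != 0].
  by rewrite !intr_eq0.
have -> : (a == b)%:R = ((a == b)%:Z)%:~R :> K by [].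
apply: (mulIf (mulf_neq0 (mulf_neq0 uuK vvK) wwK)); rewrite -E.
by field; rewrite uuK vvK wwK.
Qed.

Lemma vproj3_row u v w j l a : complete3 u v w -> chart_index j = Some a ->
  (vproj u + vproj v + vproj w) j l = (l == j)%:R.
Proof.
move=> uvw ja; rewrite !mxE /chart_coord ja.
have [a3 ->] := chart_index_some ja.
case lb: (chart_index l) => [b|]; last first.
  rewrite !mulr0 !mul0r !addr0; case: eqP => // lj.
  by move: lb; rewrite lj chart_index_pos.
have [b3 ->] := chart_index_some lb.
rewrite -!intrM uvw //.
have [<-|ab] := eqVneq a b; first by rewrite !eqxx.
case: eqP => // /(congr1 chart_index); rewrite !chart_index_pos // => -[ba].
by move: ab; rewrite ba eqxx.
Qed.

Lemma vproj3_col u v w i j a : complete3 u v w -> chart_index j = Some a ->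
  (vproj u + vproj v + vproj w) i j = (i == j)%:R.
Proof. by move=> uvw ja; rewrite -(vproj3_row i uvw ja) !mxE; ring. Qed.

Lemma delta_mul_vproj3 u v w j a : complete3 u v w -> chart_index j = Some a ->
  delta_mx j j * (vproj u + vproj v + vproj w) = delta_mx j j.
Proof.
move=> uvw ja; apply/matrixP => i l; rewrite -mulmxE !mxE.
rewrite (bigD1 j) //= big1 ?addr0 => [|r /negbTE rj]; last by rewrite mxE rj andbF mul0r.
by rewrite mxE eqxx andbT (vproj3_row l uvw ja) -natrM mulnb.
Qed.

Lemma vproj3_mul_delta u v w j a : complete3 u v w -> chart_index j = Some a ->
  (vproj u + vproj v + vproj w) * delta_mx j j = delta_mx j j.
Proof.
move=> uvw ja; apply/matrixP => i l; rewrite -mulmxE !mxE.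
rewrite (bigD1 j) //= big1 ?addr0 => [|r /negbTE rj].
  by rewrite (vproj3_col i uvw ja) [delta_mx _ _ _ _]mxE eqxx /= -natrM mulnb andbC.
by rewrite [delta_mx _ _ _ _]mxE rj mulr0.
Qed.

End RankOneProjections.

Lemma chart_exists m (j : 'I_m.+3) :
  exists k : 'I_m.+3, (2 <= k)%N /\ exists a, chart_index k j = Some a.
Proof.
case: (leqP 2 j) => [j_ge2 | j_lt2].
  exists j; split=> //; exists 2%N; rewrite /chart_index.
  by case: j j_ge2 => [[|[|j]] ?] //= _; rewrite eqxx.
exists (Ordinal (isT : 2 < m.+3)%N); split=> //; rewrite /chart_index.
by case: j j_lt2 => [[|[|j]] ?] //=; eexists.
Qed.

Definition ks_vectors : seq vec3 := [::
  (0, 0, 1); (0, 1, -2); (0, 1, -1); (0, 1, 0); (0, 1, 1); (0, 2, 1); (1, -2, -2); (1, -2, -1);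
  (1, -2, 0); (1, -2, 1); (1, -2, 2); (1, -1, -1); (1, -1, 0); (1, -1, 1); (1, -1, 2); (1, 0, -2);
  (1, 0, -1); (1, 0, 0); (1, 0, 1); (1, 0, 2); (1, 1, -2); (1, 1, -1); (1, 1, 0); (1, 1, 1);
  (1, 1, 2); (1, 2, 0); (1, 2, 1); (2, -1, -2); (2, -1, -1); (2, -1, 0); (2, -1, 1); (2, -1, 2);
  (2, 0, -1); (2, 0, 1); (2, 1, -1); (2, 1, 0); (2, 1, 1); (2, 2, -1); (2, 2, 1)].

Definition ks_bases : seq (seq nat) := [::
  [:: 0; 3; 17]; [:: 0; 8; 35]; [:: 0; 12; 22]; [:: 0; 25; 29]; [:: 1; 5; 17]; [:: 2; 4; 17];
  [:: 2; 11; 36]; [:: 2; 23; 28]; [:: 3; 15; 33]; [:: 3; 16; 18]; [:: 3; 19; 32]; [:: 4; 13; 34];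
  [:: 4; 21; 30]; [:: 6; 31; 37]; [:: 7; 18; 21]; [:: 9; 16; 23]; [:: 10; 27; 38]; [:: 11; 14; 22];
  [:: 12; 20; 23]; [:: 12; 21; 24]; [:: 13; 16; 26]].

Definition ks_proof : ks_tree :=
  (KSNode 0 (KSNode 4 (KSNode 5 (KSNode 17 (KSLeaf 11 2) (KSNode 10 (KSLeaf 3 0) (KSNode
  11 (KSLeaf 4 2) (KSNode 9 (KSLeaf 3 0) (KSLeaf 16 13) (KSNode 12 (KSLeaf 4 2) (KSLeaf 21
  18) (KSNode 8 (KSLeaf 3 0) (KSLeaf 15 30) (KSNode 18 (KSLeaf 12 0) (KSLeaf 20 33)
  (KSLeaf 23 2))))) (KSLeaf 34 19)) (KSLeaf 32 14)) (KSLeaf 22 0)) (KSNode 14 (KSLeaf 7 1)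
  (KSNode 16 (KSLeaf 10 4) (KSLeaf 27 18) (KSLeaf 38 1)) (KSLeaf 21 4)) (KSLeaf 17 0))
  (KSNode 17 (KSNode 5 (KSLeaf 2 11) (KSNode 9 (KSLeaf 3 0) (KSNode 18 (KSLeaf 12 0)
  (KSLeaf 20 5) (KSLeaf 23 16)) (KSLeaf 18 11)) (KSLeaf 17 0)) (KSLeaf 14 5) (KSLeaf 22
  0)) (KSLeaf 17 0)) (KSNode 1 (KSLeaf 0 3) (KSNode 2 (KSLeaf 0 8) (KSNode 14 (KSNode 4
  (KSLeaf 1 7) (KSNode 13 (KSNode 5 (KSLeaf 2 6) (KSNode 6 (KSLeaf 2 4) (KSNode 7 (KSLeaf
  2 4) (KSLeaf 23 12) (KSNode 3 (KSLeaf 0 3) (KSLeaf 25 28) (KSNode 20 (KSLeaf 13 4)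
  (KSLeaf 16 3) (KSLeaf 26 29)))) (KSLeaf 36 8)) (KSLeaf 17 3)) (KSLeaf 31 5) (KSLeaf 37
  12)) (KSLeaf 17 3)) (KSLeaf 18 3) (KSLeaf 21 12)) (KSNode 6 (KSNode 11 (KSLeaf 4 2)
  (KSLeaf 13 22) (KSLeaf 34 8)) (KSLeaf 11 22) (KSLeaf 36 8))) (KSNode 14 (KSLeaf 7 35)
  (KSLeaf 18 3) (KSNode 2 (KSLeaf 0 3) (KSLeaf 12 21) (KSNode 5 (KSNode 15 (KSLeaf 9 35)
  (KSLeaf 16 3) (KSLeaf 23 2)) (KSLeaf 4 21) (KSLeaf 17 3))))) (KSNode 1 (KSLeaf 0 17)
  (KSNode 6 (KSLeaf 2 17) (KSNode 2 (KSLeaf 0 8) (KSNode 7 (KSLeaf 2 17) (KSLeaf 23 12)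
  (KSNode 3 (KSLeaf 0 17) (KSLeaf 25 28) (KSNode 9 (KSLeaf 3 17) (KSNode 11 (KSLeaf 4 17)
  (KSLeaf 13 16) (KSLeaf 34 8)) (KSLeaf 18 11)))) (KSLeaf 22 11)) (KSLeaf 36 8)) (KSNode 2
  (KSLeaf 0 17) (KSNode 7 (KSLeaf 2 17) (KSLeaf 23 12) (KSNode 3 (KSLeaf 0 17) (KSLeaf 25
  28) (KSNode 10 (KSLeaf 3 17) (KSLeaf 19 28) (KSNode 12 (KSLeaf 4 17) (KSLeaf 21 12)
  (KSNode 8 (KSLeaf 3 17) (KSLeaf 15 30) (KSNode 13 (KSLeaf 6 33) (KSNode 15 (KSLeaf 9 35)
  (KSLeaf 16 31) (KSLeaf 23 28)) (KSLeaf 37 12))))))) (KSNode 6 (KSLeaf 2 17) (KSLeaf 11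
  22) (KSNode 8 (KSLeaf 3 17) (KSLeaf 15 36) (KSNode 11 (KSLeaf 4 17) (KSLeaf 13 22)
  (KSNode 10 (KSLeaf 3 17) (KSLeaf 19 34) (KSNode 18 (KSLeaf 12 22) (KSLeaf 20 33) (KSNode
  9 (KSLeaf 3 17) (KSLeaf 16 23) (KSNode 19 (KSLeaf 12 22) (KSLeaf 21 18) (KSLeaf 24
  32))))))))))).

Definition ks_vector (i : nat) : vec3 := nth (0, 0, 0) ks_vectors i.

Definition ks_orth (i j : nat) : bool :=
  [&& dot (ks_vector i) (ks_vector i) != 0, dot (ks_vector j) (ks_vector j) != 0
    & dot (ks_vector i) (ks_vector j) == 0].

Definition ks_basis_ok (b : seq nat) : bool :=
  if b is [:: i; j; l] then
    [&& ks_orth i j, ks_orth i l, ks_orth j l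
      & complete3_check (ks_vector i) (ks_vector j) (ks_vector l)]
  else false.

Lemma ks_bases_ok : all ks_basis_ok ks_bases.
Proof. by vm_compute. Qed.

Lemma ks_proof_ok : ks_refutes ks_orth ks_bases [::] ks_proof.
Proof. by vm_compute. Qed.



Section ZariskiFunctor.
Variables (F : RingLocFunctor) (phi : forall A : comPzRingType, Fob F A -> (A -> Prop)).
Hypothesis Hphi : zariski_nat_iso F phi.

Lemma phi_radical (A : comPzRingType) (u : Fob F A) : radical_ideal (phi u).
Proof. by case: Hphi. Qed.

Lemma phi_onto (A : comPzRingType) (I : A -> Prop) :
  radical_ideal I -> exists u : Fob F A, forall a, phi u a <-> I a.
Proof. by case: Hphi => _ onto _ _; apply: onto. Qed.

Lemma phi_leP (A : comPzRingType) (u v : Fob F A) :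
  fle u v <-> (forall a, phi u a -> phi v a).
Proof. by case: Hphi. Qed.

Lemma phi_inj (A : comPzRingType) (u v : Fob F A) :
  (forall a, phi u a <-> phi v a) -> u = v.
Proof. by move=> uv; apply: fle_antisym; apply/phi_leP => a /uv. Qed.

Lemma phi_Fmap (A B : comPzRingType) (f : {rmorphism A -> B}) (u : Fob F A) b :
  phi (Fmap f u) b <-> rad_ext f (phi u) b.
Proof. by case: Hphi => _ _ _; apply. Qed.

Section OpenPoints.
Variable K : idomainType.

Definition unit_vec d (i : 'I_d) : power_ring K d := [ffun l => (l == i)%:R].

(* The radical ideal of functions vanishing off [i]; as an open set of
   [Spec K^d] it is the single point [i]. *)
Definition off_point d (i : 'I_d) (f : power_ring K d) : Prop :=
  forall l, l != i -> f l = 0.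

Lemma off_point_radical d (i : 'I_d) : radical_ideal (off_point i).
Proof.
split=> [l _ | f g fi gi l li | a f fi l li | f n fni l li]; rewrite ?ffunE.
- by [].
- by rewrite fi ?gi ?addr0.
- by rewrite fi ?mulr0.
- by move: (fni l li); rewrite power_ringXE => /eqP; rewrite expf_eq0 => /andP[_ /eqP].
Qed.

Lemma unit_vec_off_point d (i : 'I_d) : off_point i (unit_vec i).
Proof. by move=> l li; rewrite ffunE (negbTE li). Qed.

Definition open_point d (i : 'I_d) : Fob F (power_ring K d) :=
  proj1_sig (constructive_indefinite_description _ (phi_onto (off_point_radical i))).

Lemma phi_open_point d (i : 'I_d) f : phi (open_point i) f <-> off_point i f.
Proof. by rewrite /open_point; case: constructive_indefinite_description. Qed.

Lemma open_points_cover d :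
  fle (ftop _) (fsup (fun y => exists i : 'I_d, y = open_point i)).
Proof.
set s := fsup _; case: (phi_radical s) => _ s_add s_mul _.
have s_unit i : phi s (unit_vec i).
  have /phi_leP : fle (open_point i) s by apply: fle_fsup; exists i.
  by apply; apply/phi_open_point/unit_vec_off_point.
have s_1 : phi s 1.
  have -> : 1 = \sum_(i < d) unit_vec i.
    apply/ffunP=> l; rewrite sum_ffunE ffunE (bigD1 l) //= ffunE eqxx big1 ?addr0 // => j jl.
    by rewrite ffunE eq_sym (negbTE jl).
  by apply: (big_ind (phi s)) => //; case: (phi_radical s).
by apply/phi_leP => f _; rewrite -[f]mulr1; apply: s_mul.
Qed.

Lemma open_points_disjoint d (i j : 'I_d) :
  i != j -> fle (fmeet (open_point i) (open_point j)) (fbot _).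
Proof.
move=> ij; apply/phi_leP => f f_ij.
have fi : off_point i f.
  by apply/phi_open_point; move/phi_leP: (fmeet_lel (open_point i) (open_point j)); apply.
have fj : off_point j f.
  by apply/phi_open_point; move/phi_leP: (fmeet_ler (open_point i) (open_point j)); apply.
suff -> : f = 0 by case: (phi_radical (fbot (Fob F (power_ring K d)))).
apply/ffunP=> l; rewrite ffunE; have [->|li] := eqVneq l i; last exact: fi.
exact: fj.
Qed.

Definition select_point d (i : 'I_d) (f : power_ring K 2) : power_ring K d :=
  [ffun l => if l == i then f ord0 else f ord_max].

Fact select_point_zmod d (i : 'I_d) : zmod_morphism (select_point i).
Proof. by move=> f g; apply/ffunP=> l; rewrite !ffunE; case: ifP; rewrite ?ffunE. Qed.

Fact select_point_monoid d (i : 'I_d) : monoid_morphism (select_point i).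
Proof.
by split=> [|f g]; apply/ffunP=> l; rewrite !ffunE; case: ifP; rewrite ?ffunE.
Qed.

HB.instance Definition _ d (i : 'I_d) := GRing.isZmodMorphism.Build
  (power_ring K 2) (power_ring K d) (select_point i) (select_point_zmod i).
HB.instance Definition _ d (i : 'I_d) := GRing.isMonoidMorphism.Build
  (power_ring K 2) (power_ring K d) (select_point i) (select_point_monoid i).

Lemma Fmap_select_point d (i : 'I_d) :
  Fmap (select_point i) (open_point ord0) = open_point i.
Proof.
apply: phi_inj => f; rewrite phi_Fmap phi_open_point; split => [f_ext | fi J J_rad J_sel].
  apply: (f_ext _ (off_point_radical i)) => g /phi_open_point g0 l li.
  by rewrite ffunE (negbTE li); apply: g0.
have /J_sel : phi (open_point (ord0 : 'I_2)) (unit_vec ord0).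
  by apply/phi_open_point/unit_vec_off_point.
case: J_rad => _ _ J_mul _ /(J_mul f).
congr J; apply/ffunP=> l; rewrite !ffunE; have [->|li] := eqVneq l i.
  by rewrite !eqxx mulr1.
by rewrite fi // mul0r.
Qed.

Section TruthValues.
Variable A : algType K.

Lemma orth_idem_single (p : A) : p * p = p -> orth_idem (fun _ : 'I_1 => p).
Proof. by move=> pp i j; rewrite !ord1 eqxx. Qed.

Definition truth (p : A) : Fob F A :=
  if p * p =P p is ReflectT pp then
    Fmap (decomp_fun (compl_decomp (orth_idem_single pp))) (open_point ord0)
  else fbot _.

Lemma decomp_fun_select d (E : idem_decomp A d) (i : 'I_d) (pp : E i * E i = E i) f :
  decomp_fun (compl_decomp (orth_idem_single pp)) f = decomp_fun E (select_point i f).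
Proof.
rewrite /decomp_fun big_ord_recr big_ord1 /= compl_part_widen compl_part_max big_ord1.
have -> : widen_ord (leqnSn 1) ord0 = ord0 by apply: val_inj.
rewrite (bigD1 i) //= ffunE eqxx; congr (_ + _).
rewrite -(idem_part_sum E) (bigD1 i) //= addrC addrK scaler_sumr.
by apply: eq_bigr => l /negbTE li; rewrite ffunE li.
Qed.

Lemma Fmap_open_point d (E : idem_decomp A d) (i : 'I_d) :
  Fmap (decomp_fun E) (open_point i) = truth (E i).
Proof.
rewrite /truth; case: (E i * E i =P E i) => [pp|]; last by rewrite idem_part_orth eqxx.
by rewrite -Fmap_select_point; symmetry; apply: Fmap_comp => f; apply: decomp_fun_select.
Qed.

Lemma truth_cover d (E : idem_decomp A d) :
  fle (ftop _) (fsup (fun y => exists i, y = truth (E i))).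
Proof.
have E_hom := Fmap_hom F (decomp_fun E); case: (E_hom) => <- _ E_sup.
apply: fle_trans (frame_hom_le E_hom (open_points_cover d)) _.
rewrite E_sup; apply: fsup_le => _ [_ [i ->] ->].
by apply: fle_fsup; exists i; rewrite Fmap_open_point.
Qed.

Lemma truth_disjoint d (E : idem_decomp A d) (i j : 'I_d) :
  i != j -> fle (fmeet (truth (E i)) (truth (E j))) (fbot _).
Proof.
move=> ij; rewrite -!Fmap_open_point.
by apply: (frame_hom_disjoint (Fmap_hom F (decomp_fun E))); apply: open_points_disjoint.
Qed.

Lemma truth_cover_compl d (P : 'I_d -> A) : orth_idem P ->
  fle (ftop _) (fsup (fun y => (exists i, y = truth (P i)) \/ y = truth (1 - \sum_i P i))).
Proof.
move=> hP; apply: fle_trans (truth_cover (compl_decomp hP)) _.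
apply: fsup_le => _ [i ->]; apply: fle_fsup => /=.
case: (unliftP ord_max i) => [j|] ->; rewrite ?compl_part_lift ?compl_part_max; last by right.
by left; exists j.
Qed.

Lemma truth_orth (p q : A) : p * p = p -> q * q = q -> p * q = 0 -> q * p = 0 ->
  fle (fmeet (truth p) (truth q)) (fbot _).
Proof.
move=> pp qq pq qp.
pose P (i : 'I_2) := if i == ord0 then p else q.
have hP : orth_idem P by move=> [[|[|//]] ?] [[|[|//]] ?].
have := @truth_disjoint _ (compl_decomp hP) (lift ord_max ord0) (lift ord_max ord_max).
by rewrite /= !compl_part_lift; apply.
Qed.

End TruthValues.

End OpenPoints.

Section KochenSpecker.
Variables (K : numFieldType) (m : nat).

Lemma truth_vproj_orth (k : 'I_m.+3) i j : (2 <= k)%N -> ks_orth i j ->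
  fle (fmeet (truth (vproj K k (ks_vector i))) (truth (vproj K k (ks_vector j))))
      (fbot _).
Proof.
move=> k_ge2 /and3P[ii jj /eqP ij].
have ji : dot (ks_vector j) (ks_vector i) = 0 by rewrite dotC.
by apply: truth_orth; rewrite ?(vproj_idem K k_ge2 ii, vproj_idem K k_ge2 jj,
  vproj_orth K k_ge2 ij, vproj_orth K k_ge2 ji).
Qed.

Lemma truth_delta_le_basis (k j : 'I_m.+3) a b :
  (2 <= k)%N -> chart_index k j = Some a -> ks_basis_ok b ->
  fle (truth (delta_mx j j : 'M[K]_m.+3))
      (fsup (fun s => exists t : 'I_3, s = truth (vproj K k (ks_vector (nth 0%N b t))))).
Proof.
move=> k_ge2 ja; case: b => [|i [|i' [|i'' [|//]]]] //=.
case/and4P=> /and3P[ii i'i' /eqP ii'] /and3P[_ i''i'' /eqP ii''] /and3P[_ _ /eqP i'i''].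
move=> cmpl.
pose V (t : 'I_3) := ks_vector (nth 0%N [:: i; i'; i''] t).
have V_orth : orth_idem (fun t => vproj K k (V t)).
  apply: (vproj_orth_idem K k_ge2) => [[[|[|[|//]]] ?] | [[|[|[|//]]] ?] [[|[|[|//]]] ?]]
    //= _; by rewrite // dotC.
have V_sum : \sum_t vproj K k (V t) =
    vproj K k (ks_vector i) + vproj K k (ks_vector i') + vproj K k (ks_vector i'').
  by rewrite !big_ord_recl big_ord0 addr0 addrA.
have V_complete := complete3_checkP K ii i'i' i''i'' cmpl.
have compl_idem := orth_idem_compl V_orth ord_max ord_max.
rewrite eqxx compl_part_max V_sum in compl_idem.
(* [e_j] lies in the span of the basis, so [E_jj] is orthogonal to the
   complement of the projections onto the basis vectors. *)
apply: fle_fsup_disjoint (truth_cover_compl V_orth) _; rewrite V_sum.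
apply: truth_orth => //; first by rewrite -mulmxE mul_delta_mx.
  by rewrite mulrBr mulr1 (delta_mul_vproj3 k_ge2 V_complete ja) subrr.
by rewrite mulrBl mul1r (vproj3_mul_delta k_ge2 V_complete ja) subrr.
Qed.

Lemma truth_delta_bot (j : 'I_m.+3) : fle (truth (delta_mx j j : 'M[K]_m.+3)) (fbot _).
Proof.
have [k [k_ge2 [a ja]]] := chart_exists j.
apply: (ks_refutes_sound (val := fun i => truth (vproj K k (ks_vector i))) _ _ ks_proof_ok).
  by move=> b /(allP ks_bases_ok); apply: truth_delta_le_basis k_ge2 ja.
by move=> u v; apply: truth_vproj_orth.
Qed.

Lemma matrix_locale_trivial : trivial_locale (Fob F 'M[K]_m.+3).
Proof.
apply/fle_top_bot_trivial/(fle_trans (truth_cover (delta_decomp K m.+2))).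
by apply: fsup_le => _ [j ->]; apply: truth_delta_bot.
Qed.

End KochenSpecker.

End ZariskiFunctor.

Theorem mainTheorem12 (F : RingLocFunctor)
    (phi : forall A : comPzRingType, Fob F A -> (A -> Prop)) :
  zariski_nat_iso F phi ->
  (forall R : pzRingType, kochen_specker R -> trivial_locale (Fob F R)) /\
  (forall m : nat, trivial_locale (Fob F 'M[Cplx]_(m.+3))).
Proof.
move=> Hphi; have M_trivial m := matrix_locale_trivial Hphi Cplx m.
split=> // R [m [f _]].
exact: frame_hom_trivial (Fmap_hom F f) (M_trivial m).
Qed.
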